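(* Let $f\in K$ and suppose that for every strictly increasing sequence $\mathbf a$ of positive integers, $f$ has finite order with respect to $A_{\mathbf a}$ (i.e. $A_{\mathbf a}^d f=f$ for some $d\ge1$). Then there exists a strictly increasing sequence $\mathbf b$ of positive integers such that $A_{\mathbf b}f$ is quasi-symmetric.
   Context: $K$ is the ring of integer formal power series of bounded degree in $x_1,x_2,\dots$; $f\in K$ is quasi-symmetric if the coefficient of $x_{i_1}^{a_1}\cdots x_{i_k}^{a_k}$ equals that of $x_{j_1}^{a_1}\cdots x_{j_k}^{a_k}$ whenever $i_1<\dots<i_k$, $j_1<\dots<j_k$. For a strictly increasing sequence $\mathbf a=(1\le a_1<a_2<\cdots)$, $A_{\mathbf a}:K\to K$ is the algebra homomorphism substituting $x_{a_i}\mapsto x_i$ for all $i$ and every variable not of the form $x_{a_i}$ by $0$. *)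

From mathcomp Require Import all_boot all_order all_algebra.
Set Implicit Arguments. Unset Strict Implicit. Unset Printing Implicit Defensive.
Import GRing.Theory Num.Theory.

(* Variables x_1, x_2, ... are indexed by nat with x_{i+1} <-> index i.
   A monomial is an exponent vector  m : nat -> nat  (only finitely supported
   ones are genuine monomials). *)
Definition monomial := nat -> nat.
Definition series := monomial -> int.

Definition fin_supp (m : monomial) : Prop := exists N, forall i, N <= i -> m i = 0.

Definition inK (f : series) : Prop :=
  (forall m, ~ fin_supp m -> f m = 0%R) /\
  exists D, forall (m : monomial) N, (forall i, N <= i -> m i = 0) ->
     D < \sum_(i < N) m i -> f m = 0%R.

Definition strict_incr (a : nat -> nat) : Prop := forall i, a i < a i.+1.

(* pull a n : the monomial prod_i x_{a i}^{n i}  (a strictly increasing, so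
   a i >= i and j is in the range of a iff a i = j for some i <= j). *)
Definition pull (a : nat -> nat) (n : monomial) : monomial :=
  fun j => \sum_(i < j.+1) (if a i == j then n i else 0).

(* A_a : substitution x_{a_i} |-> x_i, other variables |-> 0.
   On coefficients: the coefficient of x^n in A_a f is the coefficient of
   prod_i x_{a_i}^{n_i} in f (monomials involving other variables die). *)
Definition A (a : nat -> nat) (f : series) : series := fun n => f (pull a n).

Definition mono k (idx : 'I_k -> nat) (e : 'I_k -> nat) : monomial :=
  fun x => \sum_(t < k) (if idx t == x then e t else 0).

Definition incr_idx k (idx : 'I_k -> nat) : Prop :=
  forall s t : 'I_k, (s < t)%N -> idx s < idx t.

Definition quasisym (f : series) : Prop :=
  forall k (e : 'I_k -> nat) (i j : 'I_k -> nat),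
    (forall t, 0 < e t) -> incr_idx i -> incr_idx j ->
    f (mono i e) = f (mono j e).

From mathcomp Require Import all_boot all_order all_algebra.
From mathcomp Require Import zify.
From Stdlib Require Import FunctionalExtensionality IndefiniteDescription.
Set Implicit Arguments. Unset Strict Implicit. Unset Printing Implicit Defensive.

(* Let [d m] be the order of [A (shift m 1)]; this substitution inserts an unused
   variable at position [m], so inserting any multiple of [d m] unused variables at
   [m] leaves every coefficient of [f] unchanged.  Take [b] whose gap
   [b p.+1 - b p] is divisible by both [d (b p)] and [d (b p).+1].  Inserting the
   gap at [b p], resp. at [(b p).+1], into a monomial with a variable at [b p]
   moves that variable to [b p.+1], resp. keeps it at [b p]; hence in [A b f] an
   exponent may slide from [x_(p+1)] to a free [x_p] without changing the
   coefficient.  Sliding every exponent down to [x_0, ..., x_(k-1)] shows that a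
   coefficient depends only on the sequence of exponents. *)

Definition shift (c G : nat) (j : nat) : nat := if j < c then j else j + G.

Lemma shift_incr c G : strict_incr (shift c G).
Proof. by move=> j; rewrite /shift; case: ifP; case: ifP; lia. Qed.

Lemma iter_shift c G n : iter n (shift c G) =1 shift c (n * G).
Proof.
move=> j; elim: n => [|n IH] /=; first by rewrite /shift addn0; case: ifP.
by rewrite IH /shift mulSn; case: ifP; case: ifP; lia.
Qed.

Lemma strict_incr_lt a : strict_incr a -> {homo a : i j / i < j}.
Proof. by move=> a_incr; apply: homo_ltn => // y x z; apply: ltn_trans. Qed.

Lemma strict_incr_ge a i : strict_incr a -> i <= a i.
Proof. by move=> a_incr; elim: i => // i IH; apply: leq_ltn_trans IH (a_incr i). Qed.

Lemma pull_mono a k (idx e : 'I_k -> nat) :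
  strict_incr a -> pull a (mono idx e) = mono (a \o idx) e.
Proof.
move=> a_incr; apply: functional_extensionality => j; rewrite /pull /mono /=.
transitivity (\sum_(u < j.+1) \sum_(t < k)
                 (if (a u == j) && (u == idx t :> nat) then e t else 0)).
  apply: eq_bigr => u _; case: eqP => _ /=; last by rewrite big1.
  by apply: eq_bigr => t _; rewrite eq_sym.
rewrite exchange_big; apply: eq_bigr => t _.
rewrite -big_mkcond.
apply: (eq_trans (big_ord1_cond_eq _ (fun=> e t) (fun u => a u == j) _ _)) => /=.
by case: eqP => [<-|]; rewrite ?andbF // ltnS strict_incr_ge.
Qed.

Lemma iter_A_mono a n f k (idx e : 'I_k -> nat) : strict_incr a ->
  iter n (A a) f (mono idx e) = f (mono (iter n a \o idx) e).
Proof.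
by move=> a_incr; elim: n f => // n IH f; rewrite iterSr IH /A pull_mono.
Qed.

Definition shift_invariant (f : series) (c G : nat) : Prop :=
  forall k (idx e : 'I_k -> nat), f (mono (shift c G \o idx) e) = f (mono idx e).

Lemma period_shift_invariant f c d t :
  iter d (A (shift c 1)) f = f -> shift_invariant f c (t * d).
Proof.
move=> periodic k idx e.
have periodic_t : iter (t * d) (A (shift c 1)) f = f.
  by rewrite iterM; elim: t => //= t ->.
rewrite -[in RHS]periodic_t iter_A_mono; last exact: shift_incr.
congr (f (mono _ e)); apply: functional_extensionality => s /=.
by rewrite iter_shift muln1.
Qed.

Lemma incr_idx_ge k (i : 'I_k -> nat) (t : 'I_k) : incr_idx i -> t <= i t.
Proof.
move=> i_incr; case: t => t lt_tk /=; elim: t lt_tk => // t IH lt_tk.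
have lt_tk' : t < k by apply: ltnW.
exact: leq_ltn_trans (IH lt_tk') (i_incr (Ordinal lt_tk') (Ordinal lt_tk) _).
Qed.

Lemma incr_idx_lower k (i : 'I_k -> nat) (t : 'I_k) :
  incr_idx i -> t < i t -> (forall s : 'I_k, s < t -> i s = s) ->
  incr_idx [eta i with t |-> (i t).-1].
Proof.
move=> i_incr t_lt i_low s s' lt_ss' /=.
case: (eqVneq s t) => [eq_st|_]; case: (eqVneq s' t) => [eq_s't|_].
- by rewrite eq_st eq_s't ltnn in lt_ss'.
- by have := i_incr _ _ lt_ss'; rewrite eq_st; lia.
- by rewrite eq_s't in lt_ss'; rewrite i_low //; lia.
- exact: i_incr.
Qed.

Section Sliding.

Variables (f : series) (b : nat -> nat).
Hypothesis b_incr : strict_incr b.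
Hypothesis gap_invariant :
  forall p c, b p <= c <= (b p).+1 -> shift_invariant f c (b p.+1 - b p).

Lemma slide_index k (i e : 'I_k -> nat) t p :
  incr_idx i -> incr_idx [eta i with t |-> p] -> i t = p.+1 ->
  f (mono (b \o i) e) = f (mono (b \o [eta i with t |-> p]) e).
Proof.
move=> i_incr i'_incr it_eq.
pose G := b p.+1 - b p.
have b_lt := strict_incr_lt b_incr.
have bpG : b p + G = b p.+1 by have := b_incr p; rewrite /G; lia.
(* [idx0] is the monomial before the gap is inserted at [b p], resp. [(b p).+1]. *)
pose idx0 s := if s == t then b p else if s < t then b (i s) else b (i s) - G.
have idx0E s : shift (b p) G (idx0 s) = b (i s) /\
               shift (b p).+1 G (idx0 s) = b ([eta i with t |-> p] s).
  rewrite /idx0 /shift /=; case: (eqVneq s t) => [->|ne_st].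
    by rewrite ltnn ltnSn it_eq bpG.
  case: (ltngtP s t) => [lt_st|lt_ts|/val_inj eq_st];
    last by rewrite eq_st eqxx in ne_st.
  - have := b_lt _ _ (i'_incr _ _ lt_st); rewrite /= (negbTE ne_st) eqxx => lt_bi.
    by rewrite lt_bi ltnS ltnW.
  - have := b_lt _ _ (i_incr _ _ lt_ts); rewrite it_eq => lt_bi.
    by split; case: ifP; lia.
have [inv_lo inv_hi] : shift_invariant f (b p) G /\ shift_invariant f (b p).+1 G.
  by split; apply: gap_invariant; rewrite ?leqnn ?leqnSn.
transitivity (f (mono idx0 e)).
  rewrite -(inv_lo _ idx0); congr (f (mono _ e)).
  by apply: functional_extensionality => s; rewrite /= (idx0E s).1.
rewrite -(inv_hi _ idx0); congr (f (mono _ e)).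
by apply: functional_extensionality => s; apply: (idx0E s).2.
Qed.

Lemma slide_to_initial k (i e : 'I_k -> nat) :
  incr_idx i -> f (mono (b \o i) e) = f (mono (b \o val) e).
Proof.
have [n] := ubnP (\sum_(t < k) i t); elim: n i => // n IH i lt_sum i_incr.
case: (pickP (fun t : 'I_k => t < i t)) => [t0 t0_lt | i_fixed]; last first.
  congr (f (mono _ e)); apply: functional_extensionality => t /=; congr b.
  by apply/eqP; rewrite eqn_leq incr_idx_ge // leqNgt i_fixed.
case: (@arg_minnP _ t0 (fun t => t < i t) val t0_lt) => t t_lt t_min.
have i_low (s : 'I_k) : s < t -> i s = s.
  move=> lt_st; apply/eqP; rewrite eqn_leq incr_idx_ge // andbT leqNgt.
  by apply: contraTN lt_st => /t_min; rewrite -leqNgt.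
pose i' := [eta i with t |-> (i t).-1].
have i'_incr : incr_idx i' by apply: incr_idx_lower.
rewrite (slide_index e i_incr i'_incr); last by rewrite (ltn_predK t_lt).
apply: IH i'_incr; rewrite -ltnS; apply: leq_ltn_trans lt_sum.
rewrite (bigD1 t) // [X in _ < X](bigD1 t) //= eqxx.
rewrite (eq_bigr i) => [|s /negbTE -> //].
by rewrite ltn_add2r (ltn_predK t_lt).
Qed.

End Sliding.

Fixpoint spacing (d : nat -> nat) (n : nat) : nat :=
  if n is n'.+1 then spacing d n' + d (spacing d n') * d (spacing d n').+1 else 0.

Lemma spacing_incr d : (forall m, 0 < d m) -> strict_incr (spacing d).
Proof. by move=> d_gt0 n /=; rewrite -[X in X < _]addn0 ltn_add2l muln_gt0 !d_gt0. Qed.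

Theorem lemma8p5 (f : series) :
  inK f ->
  (forall a : nat -> nat, strict_incr a ->
     exists d : nat, 0 < d /\ iter d (A a) f = f) ->
  exists b : nat -> nat, strict_incr b /\ quasisym (A b f).
Proof.
move=> _ periodic.
have [d d_period] := functional_choice
  (fun m d => 0 < d /\ iter d (A (shift m 1)) f = f) (fun m => periodic _ (shift_incr m 1)).
have d_gt0 m : 0 < d m by case: (d_period m).
have b_incr := spacing_incr d_gt0.
have gap_invariant p c : spacing d p <= c <= (spacing d p).+1 ->
    shift_invariant f c (spacing d p.+1 - spacing d p).
  rewrite /= addKn => /andP [lo hi].
  have [->|->] : c = spacing d p \/ c = (spacing d p).+1 by lia.
  - by rewrite mulnC; apply: period_shift_invariant; case: (d_period (spacing d p)).
  - by apply: period_shift_invariant; case: (d_period (spacing d p).+1).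
exists (spacing d); split => // k e i j _ i_incr j_incr.
by rewrite /A !pull_mono // !(slide_to_initial b_incr gap_invariant).
Qed.
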